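(* Let $f_1,f_2$ be strongly hyperbolic functions and let $p_1,p_2,p_3\in\mathcal{P}$ be three points in admissible position. Then at least one element of $\mathcal{C}^-(f_1,f_2)$ contains $p_1,p_2,p_3$.
   Context: Identify $\mathbb{S}^1$ with $\mathbb{R}\cup\{\infty\}$, $\mathcal{P}=\mathbb{S}^1\times\mathbb{S}^1$, $\mathbb{R}^+=(0,\infty)$. A function $f:\mathbb{R}^+\to\mathbb{R}^+$ is strongly hyperbolic if: (1) $\lim_{x\to0+}f(x)=+\infty$, $\lim_{x\to+\infty}f(x)=0$; (2) $f$ strictly convex; (3) $\lim_{x\to+\infty}f(x+b)/f(x)=1$ for each $b\in\mathbb{R}$; (4) $f$ differentiable; (5) $\ln|f'|$ strictly convex. For $a>0$, $b,c\in\mathbb{R}$: $f_{a,b,c}(x)=af_1(x+b)+c$ for $x>-b$, $f_{a,b,c}(x)=-af_2(-x-b)+c$ for $x<-b$; $\overline{f_{a,b,c}}=\{(x,f_{a,b,c}(x)):x\ne-b\}\cup\{(-b,\infty),(\infty,c)\}$; $\overline{l_{s,t}}=\{(x,sx+t):x\in\mathbb{R}\}\cup\{(\infty,\infty)\}$; $\mathcal{C}^-(f_1,f_2)=\{\overline{f_{a,b,c}}:a>0,b,c\in\mathbb{R}\}\cup\{\overline{l_{s,t}}:s<0,t\in\mathbb{R}\}$. Three points are in admissible position if they are all contained in one set of the form $\{(x,sx+t):x\in\mathbb{R}\}\cup\{(\infty,\infty)\}$ with $s<0$, $t\in\mathbb{R}$, or of the form $\{(x,y)\in\mathbb{R}^2:(x-b)(y-c)=a\}\cup\{(\infty,c),(b,\infty)\}$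 with $a>0$, $b,c\in\mathbb{R}$ (the orientation-reversing circles of the classical flat Minkowski plane). *)

From Stdlib Require Import Reals Lra.
From Coquelicot Require Import Coquelicot.
Open Scope R_scope.

(* S^1 = R ∪ {∞}: [Some x] is the real x, [None] is ∞. *)
Definition S1 := option R.
Definition point := (S1 * S1)%type.

Definition strictly_convex_pos (g : R -> R) : Prop :=
  forall x y t, 0 < x -> 0 < y -> x <> y -> 0 < t < 1 ->
    g (t * x + (1 - t) * y) < t * g x + (1 - t) * g y.

(* f : R^+ -> R^+ is modelled by a total f : R -> R, only its values on
   (0,+oo) matter. *)
Definition strongly_hyperbolic (f : R -> R) : Prop :=
  (forall x, 0 < x -> 0 < f x) /\
  filterlim f (at_right 0) (Rbar_locally p_infty) /\
  filterlim f (Rbar_locally p_infty) (locally 0) /\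
  strictly_convex_pos f /\
  (forall b : R, filterlim (fun x => f (x + b) / f x) (Rbar_locally p_infty) (locally 1)) /\
  (forall x, 0 < x -> ex_derive f x) /\
  strictly_convex_pos (fun x => ln (Rabs (Derive f x))).

Definition fabc (f1 f2 : R -> R) (a b c : R) (x : R) : R :=
  if Rlt_dec (- b) x then a * f1 (x + b) + c else - a * f2 (- x - b) + c.

Definition fabc_bar (f1 f2 : R -> R) (a b c : R) (p : point) : Prop :=
  (exists x, x <> - b /\ p = (Some x, Some (fabc f1 f2 a b c x))) \/
  p = (Some (- b), None) \/ p = (None, Some c).

Definition lst_bar (s t : R) (p : point) : Prop :=
  (exists x, p = (Some x, Some (s * x + t))) \/ p = (None, None).

Definition in_Cminus (f1 f2 : R -> R) (C : point -> Prop) : Prop :=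
  (exists a b c, 0 < a /\ C = fabc_bar f1 f2 a b c) \/
  (exists s t, s < 0 /\ C = lst_bar s t).

(* orientation-reversing circle of the classical flat Minkowski plane *)
Definition hyp_bar (a b c : R) (p : point) : Prop :=
  (exists x y, (x - b) * (y - c) = a /\ p = (Some x, Some y)) \/
  p = (None, Some c) \/ p = (Some b, None).

Definition admissible (p1 p2 p3 : point) : Prop :=
  (exists s t, s < 0 /\ lst_bar s t p1 /\ lst_bar s t p2 /\ lst_bar s t p3) \/
  (exists a b c, 0 < a /\ hyp_bar a b c p1 /\ hyp_bar a b c p2 /\ hyp_bar a b c p3).

From Stdlib Require Import Reals Lra Classical Ranalysis5.
From Coquelicot Require Import Coquelicot.
Open Scope R_scope.

(* For a hyperbola (x - b)(y - c) = a > 0, up to the order of the points and up to the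
   reflection (x, y) |-> (-x, -y), which exchanges f1 and f2, the points fall into a few
   configurations relative to the two branches. When the point (b, oo) is among them the
   parameters of f_{a',b',c'} are linear in the data; otherwise one solves a single equation
   in the shift u = x + b' by the intermediate value theorem: near u = 0 the blow-up of f1
   gives one sign, and the opposite sign comes from the blow-up of f2 on the other branch
   or, when all finite points lie on one branch, from the ratio condition
   f (x + b) / f x -> 1, combined for three points with convexity in a telescoping
   argument. *)

Section StronglyHyperbolic.

Variable f : R -> R.
Hypothesis Hf : strongly_hyperbolic f.

Lemma sh_pos x : 0 < x -> 0 < f x.
Proof. destruct Hf as [H _]; auto. Qed.

Lemma sh_ex_derive x : 0 < x -> ex_derive f x.
Proof. destruct Hf as (_ & _ & _ & _ & _ & H & _); auto. Qed.

Lemma sh_convex3 x y z : 0 < x -> x < y -> y < z ->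
  (z - x) * f y < (z - y) * f x + (y - x) * f z.
Proof.
  intros Hx Hxy Hyz. destruct Hf as (_ & _ & _ & Hc & _).
  set (t := (z - y) / (z - x)).
  assert (Ht : 0 < t < 1).
  { unfold t; split.
    - apply Rdiv_lt_0_compat; lra.
    - apply (Rdiv_lt_1 (z - y) (z - x)); lra. }
  pose proof (Hc x z t Hx ltac:(lra) ltac:(lra) Ht) as H.
  replace (t * x + (1 - t) * z) with y in H by (unfold t; field; lra).
  apply (Rmult_lt_compat_l (z - x)) in H; [|lra].
  replace ((z - x) * (t * f x + (1 - t) * f z))
    with ((z - y) * f x + (y - x) * f z) in H by (unfold t; field; lra).
  exact H.
Qed.

Lemma sh_large_near_0 M e : 0 < e -> exists x, 0 < x < e /\ M < f x.
Proof.
  intros He. destruct Hf as (_ & H & _).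
  destruct (H (fun y => M < y) (ex_intro _ M (fun _ h => h))) as [d Hd].
  set (x := Rmin d e / 2).
  assert (Hx : 0 < x < d /\ x < e)
    by (pose proof (cond_pos d); unfold x, Rmin; destruct Rle_dec; lra).
  exists x. split; [lra|]. apply Hd; [|lra].
  change (Rabs (x - 0) < d). rewrite Rminus_0_r, Rabs_pos_eq; lra.
Qed.

Lemma sh_small_near_infty e : 0 < e -> exists N, forall x, N < x -> f x < e.
Proof.
  intros He. destruct Hf as (_ & _ & H & _).
  destruct (proj1 (filterlim_locally f 0) H (mkposreal e He)) as [N HN].
  exists N. intros x Hx. specialize (HN x Hx).
  change (Rabs (f x - 0) < e) in HN. apply Rabs_def2 in HN. lra.
Qed.

Lemma sh_shift_ratio_gt b q : q < 1 ->
  exists N, 0 < N /\ forall x, N < x -> q * f x < f (x + b).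
Proof.
  intros Hq. destruct Hf as (_ & _ & _ & _ & H & _).
  destruct (proj1 (filterlim_locally _ 1) (H b) (mkposreal (1 - q) ltac:(lra))) as [N HN].
  exists (Rmax N 1). split; [pose proof (Rmax_r N 1); lra|].
  intros x Hx. pose proof (Rmax_l N 1). pose proof (Rmax_r N 1).
  specialize (HN x ltac:(lra)). change (Rabs (f (x + b) / f x - 1) < 1 - q) in HN.
  apply Rabs_def2 in HN.
  assert (Hfx : 0 < f x) by (apply sh_pos; lra).
  replace (f (x + b)) with (f (x + b) / f x * f x) by (field; lra).
  apply Rmult_lt_compat_r; lra.
Qed.

Lemma sh_decreasing x y : 0 < x -> x < y -> f y < f x.
Proof.
  intros Hx Hxy. destruct (Rlt_or_le (f y) (f x)) as [H|H]; auto. exfalso.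
  (* convexity makes [f] increase beyond [y], against [f -> 0] at infinity *)
  destruct (sh_small_near_infty (f y)) as [N HN]; [apply sh_pos; lra|].
  set (z := Rmax N y + 1).
  pose proof (Rmax_l N y). pose proof (Rmax_r N y).
  specialize (HN z ltac:(unfold z; lra)).
  pose proof (sh_convex3 x y z Hx Hxy ltac:(unfold z; lra)).
  assert ((z - y) * f x <= (z - y) * f y) by (apply Rmult_le_compat_l; unfold z; lra).
  assert (Hyz : (y - x) * f y < (y - x) * f z) by lra.
  apply Rmult_lt_reg_l in Hyz; lra.
Qed.

End StronglyHyperbolic.

Lemma continuous_sign_change_root (h : R -> R) lo hi : lo < hi ->
  (forall x, lo <= x <= hi -> continuous h x) -> h hi < 0 < h lo ->
  exists x, lo <= x <= hi /\ h x = 0.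
Proof.
  intros Hlh Hc [Hhi Hlo].
  destruct (IVT_interv (fun x => - h x) lo hi) as [x [Hx Hx0]]; try lra.
  - intros x Hx. apply continuity_pt_opp, continuity_pt_filterlim, Hc, Hx.
  - exists x. split; [exact Hx | lra].
Qed.

Lemma sh_ratio_root f d r : strongly_hyperbolic f -> 0 < d -> 1 < r ->
  exists u, 0 < u /\ f u = r * f (u + d).
Proof.
  intros Hf Hd Hr.
  destruct (sh_large_near_0 f Hf (r * f d) 1) as [lo [Hlo Hflo]]; [lra|].
  destruct (sh_shift_ratio_gt f Hf d (/ r)) as [N [HN HNr]].
  { rewrite <- Rinv_1. apply Rinv_lt_contravar; lra. }
  set (hi := Rmax N lo + 1).
  assert (Hhi : N < hi /\ lo < hi) by (unfold hi; pose proof (Rmax_l N lo); pose proof (Rmax_r N lo); lra).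
  destruct (continuous_sign_change_root (fun u => f u - r * f (u + d)) lo hi)
    as [u [Hu Hu0]]; [lra | | split | exists u; split; lra].
  - intros x Hx. apply (@ex_derive_continuous R_AbsRing R_NormedModule). auto_derive.
    repeat split; apply (sh_ex_derive f Hf); lra.
  - specialize (HNr hi (proj1 Hhi)).
    apply (Rmult_lt_compat_l r) in HNr; [|lra].
    rewrite <- Rmult_assoc, Rinv_r, Rmult_1_l in HNr by lra. lra.
  - assert (f (lo + d) < f d) by (apply (sh_decreasing f Hf); lra).
    assert (r * f (lo + d) < r * f d) by (apply Rmult_lt_compat_l; lra). lra.
Qed.

Lemma sh_two_sided_root f g D d p k : strongly_hyperbolic f -> strongly_hyperbolic g ->
  0 < D -> 0 < d -> 0 <= p -> 0 < k ->
  exists u, 0 < u < D /\ f u = p * f (u + d) + k * g (D - u).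
Proof.
  intros Hf Hg HD Hd Hp Hk.
  destruct (sh_large_near_0 f Hf (p * f d + k * g (D / 2)) (D / 2)) as [lo [Hlo Hflo]]; [lra|].
  destruct (sh_large_near_0 g Hg (f (D / 2) / k) (D / 2)) as [w [Hw Hgw]]; [lra|].
  destruct (continuous_sign_change_root (fun u => f u - p * f (u + d) - k * g (D - u)) lo (D - w))
    as [u [Hu Hu0]]; [lra | | split | exists u; split; lra].
  - intros x Hx. apply (@ex_derive_continuous R_AbsRing R_NormedModule). auto_derive.
    repeat split; first [apply (sh_ex_derive f Hf) | apply (sh_ex_derive g Hg)]; lra.
  - replace (D - (D - w)) with w by ring.
    assert (f (D - w) < f (D / 2)) by (apply (sh_decreasing f Hf); lra).
    assert (0 <= p * f (D - w + d)) by (apply Rmult_le_pos; [lra | left; apply (sh_pos f Hf); lra]).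
    apply (Rmult_lt_compat_l k) in Hgw; [|lra].
    replace (k * (f (D / 2) / k)) with (f (D / 2)) in Hgw by (field; lra). lra.
  - assert (p * f (lo + d) <= p * f d)
      by (apply Rmult_le_compat_l; [lra | left; apply (sh_decreasing f Hf); lra]).
    assert (k * g (D - lo) < k * g (D / 2))
      by (apply Rmult_lt_compat_l; [lra | apply (sh_decreasing g Hg); lra]). lra.
Qed.

Lemma nonneg_of_step_nonincreasing (F : R -> R) v0 :
  (forall v, v0 < v -> F (v + 1) <= F v) ->
  (forall e, 0 < e -> exists N, forall x, N < x -> - e < F x) ->
  forall v, v0 < v -> 0 <= F v.
Proof.
  intros Hstep Hinf v Hv. apply Rnot_lt_le. intros HF.
  destruct (Hinf (- F v)) as [N HN]; [lra|].
  destruct (INR_unbounded (N - v)) as [n Hn].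
  assert (Hiter : forall m, F (v + INR m) <= F v).
  { induction m as [|m IH].
    - simpl. rewrite Rplus_0_r. lra.
    - rewrite S_INR, <- Rplus_assoc. pose proof (pos_INR m).
      specialize (Hstep (v + INR m) ltac:(lra)). lra. }
  specialize (HN (v + INR n) ltac:(lra)). specialize (Hiter n). lra.
Qed.

Lemma sh_convex_unit_steps f d1 d2 A B v : strongly_hyperbolic f ->
  0 < d1 < d2 -> 0 < A -> 0 < B -> 0 < v ->
  A * (f (v + 1 + d1) - f (v + 1 + d2)) <= B * (f (v + 1) - f (v + 1 + d1)) ->
  A * (d2 - d1) * (f (v + 1 + d2) - f (v + 1 + d2 + 1)) < B * d1 * (f v - f (v + 1)).
Proof.
  intros Hf Hd HA HB Hv Hgap.
  pose proof (sh_convex3 f Hf v (v + 1) (v + 1 + d1) Hv ltac:(lra) ltac:(lra)) as C1.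
  pose proof (sh_convex3 f Hf (v + 1 + d1) (v + 1 + d2) (v + 1 + d2 + 1)
    ltac:(lra) ltac:(lra) ltac:(lra)) as C2.
  assert (B * (f (v + 1) - f (v + 1 + d1)) < B * (d1 * (f v - f (v + 1))))
    by (apply Rmult_lt_compat_l; lra).
  assert (A * ((d2 - d1) * (f (v + 1 + d2) - f (v + 1 + d2 + 1)))
            < A * (f (v + 1 + d1) - f (v + 1 + d2)))
    by (apply Rmult_lt_compat_l; lra).
  lra.
Qed.

Lemma sh_convex_gap_far f d1 d2 A B : strongly_hyperbolic f ->
  0 < d1 < d2 -> 0 < A -> 0 < B -> B * d1 < A * (d2 - d1) ->
  exists u, 0 < u /\ B * (f u - f (u + d1)) < A * (f (u + d1) - f (u + d2)).
Proof.
  intros Hf Hd HA HB Hslope. apply NNPP. intros Hno.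
  (* Otherwise [F] below is nonincreasing along unit steps and tends to [0], hence [F >= 0],
     i.e. [f (v + E) <= K1 / K2 * f v] with [K1 / K2 < 1], against the ratio condition. *)
  assert (Hgap : forall u, 0 < u -> A * (f (u + d1) - f (u + d2)) <= B * (f u - f (u + d1))).
  { intros u Hu. apply Rnot_lt_le. intros Hlt. apply Hno. exists u. auto. }
  set (K1 := B * d1). set (K2 := A * (d2 - d1)). set (E := 1 + d2).
  assert (HK : 0 < K1 < K2) by (unfold K1, K2; split; [apply Rmult_lt_0_compat|]; lra).
  set (F := fun v => K1 * f v - K2 * f (v + E)).
  assert (Hstep : forall v, 0 < v -> F (v + 1) <= F v).
  { intros v Hv. unfold F, K1, K2.
    replace (v + 1 + E) with (v + 1 + d2 + 1) by (unfold E; ring).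
    replace (v + E) with (v + 1 + d2) by (unfold E; ring).
    pose proof (sh_convex_unit_steps f d1 d2 A B v Hf Hd HA HB Hv (Hgap (v + 1) ltac:(lra))).
    lra. }
  assert (HF : forall v, 0 < v -> 0 <= F v).
  { apply (nonneg_of_step_nonincreasing F 0 Hstep). intros e He.
    destruct (sh_small_near_infty f Hf (e / K2)) as [N HN]; [apply Rdiv_lt_0_compat; lra|].
    exists (Rmax N 0). intros x Hx. pose proof (Rmax_l N 0). pose proof (Rmax_r N 0).
    specialize (HN (x + E) ltac:(unfold E; lra)).
    assert (0 < f x) by (apply (sh_pos f Hf); lra).
    apply (Rmult_lt_compat_l K2) in HN; [|lra].
    replace (K2 * (e / K2)) with e in HN by (field; lra).
    unfold F. assert (0 < K1 * f x) by (apply Rmult_lt_0_compat; lra). lra. }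
  destruct (sh_shift_ratio_gt f Hf E (K1 / K2)) as [N [HN HNr]].
  { apply (Rdiv_lt_1 K1 K2); lra. }
  specialize (HF (N + 1) ltac:(lra)). specialize (HNr (N + 1) ltac:(lra)).
  apply (Rmult_lt_compat_l K2) in HNr; [|lra].
  replace (K2 * (K1 / K2 * f (N + 1))) with (K1 * f (N + 1)) in HNr by (field; lra).
  unfold F in HF. lra.
Qed.

Lemma sh_convex_root f d1 d2 A B : strongly_hyperbolic f ->
  0 < d1 < d2 -> 0 < A -> 0 < B -> B * d1 < A * (d2 - d1) ->
  exists u, 0 < u /\ B * (f u - f (u + d1)) = A * (f (u + d1) - f (u + d2)).
Proof.
  intros Hf Hd HA HB Hslope.
  destruct (sh_convex_gap_far f d1 d2 A B Hf Hd HA HB Hslope) as [hi [Hhi Hgap]].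
  destruct (sh_large_near_0 f Hf ((A + B) * f d1 / B) hi Hhi) as [lo [Hlo Hflo]].
  destruct (continuous_sign_change_root
              (fun u => B * (f u - f (u + d1)) - A * (f (u + d1) - f (u + d2))) lo hi)
    as [u [Hu Hu0]]; [lra | | split | exists u; split; lra].
  - intros x Hx. apply (@ex_derive_continuous R_AbsRing R_NormedModule). auto_derive.
    repeat split; apply (sh_ex_derive f Hf); lra.
  - lra.
  - apply (Rmult_lt_compat_l B) in Hflo; [|lra].
    replace (B * ((A + B) * f d1 / B)) with ((A + B) * f d1) in Hflo by (field; lra).
    assert (f (lo + d1) < f d1) by (apply (sh_decreasing f Hf); lra).
    assert ((A + B) * f (lo + d1) < (A + B) * f d1) by (apply Rmult_lt_compat_l; lra).
    assert (0 < A * f (lo + d2)) by (apply Rmult_lt_0_compat; [lra | apply (sh_pos f Hf); lra]).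
    lra.
Qed.

Definition fabc_through (f1 f2 : R -> R) (p1 p2 p3 : point) : Prop :=
  exists a b c, 0 < a /\
    fabc_bar f1 f2 a b c p1 /\ fabc_bar f1 f2 a b c p2 /\ fabc_bar f1 f2 a b c p3.

Lemma fabc_through_swap12 f1 f2 p1 p2 p3 :
  fabc_through f1 f2 p2 p1 p3 -> fabc_through f1 f2 p1 p2 p3.
Proof. intros (a & b & c & Ha & H1 & H2 & H3). exists a, b, c. tauto. Qed.

Lemma fabc_through_swap23 f1 f2 p1 p2 p3 :
  fabc_through f1 f2 p1 p3 p2 -> fabc_through f1 f2 p1 p2 p3.
Proof. intros (a & b & c & Ha & H1 & H2 & H3). exists a, b, c. tauto. Qed.

Lemma fabc_through_rev f1 f2 p1 p2 p3 :
  fabc_through f1 f2 p3 p2 p1 -> fabc_through f1 f2 p1 p2 p3.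
Proof. intros (a & b & c & Ha & H1 & H2 & H3). exists a, b, c. tauto. Qed.

Lemma fabc_bar_right f1 f2 a b c x y : - b < x -> a * f1 (x + b) + c = y ->
  fabc_bar f1 f2 a b c (Some x, Some y).
Proof.
  intros Hx Hy. left. exists x. split; [lra|].
  unfold fabc. destruct Rlt_dec; [now subst | lra].
Qed.

Lemma fabc_bar_left f1 f2 a b c x y : x < - b -> - a * f2 (- x - b) + c = y ->
  fabc_bar f1 f2 a b c (Some x, Some y).
Proof.
  intros Hx Hy. left. exists x. split; [lra|].
  unfold fabc. destruct Rlt_dec; [lra | now subst].
Qed.

Lemma fabc_bar_asymptote f1 f2 a b c : fabc_bar f1 f2 a b c (None, Some c).
Proof. now right; right. Qed.

Lemma fabc_bar_pole f1 f2 a b c : fabc_bar f1 f2 a (- b) c (Some b, None).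
Proof. right; left. now rewrite Ropp_involutive. Qed.

Lemma fabc_through_asymptote_right2 f1 f2 c x1 x2 y1 y2 : strongly_hyperbolic f1 ->
  x1 < x2 -> c < y2 < y1 ->
  fabc_through f1 f2 (None, Some c) (Some x1, Some y1) (Some x2, Some y2).
Proof.
  intros Hf1 Hx Hy.
  destruct (sh_ratio_root f1 (x2 - x1) ((y1 - c) / (y2 - c)) Hf1) as [u [Hu Hfu]];
    [lra | apply Rlt_div_r; lra |].
  assert (0 < f1 (u + (x2 - x1))) by (apply (sh_pos f1 Hf1); lra).
  exists ((y2 - c) / f1 (u + (x2 - x1))), (u - x1), c.
  split; [apply Rdiv_lt_0_compat; lra|].
  split; [apply fabc_bar_asymptote | split; apply fabc_bar_right; try lra].
  - replace (x1 + (u - x1)) with u by ring. rewrite Hfu. field. lra.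
  - replace (x2 + (u - x1)) with (u + (x2 - x1)) by ring. field. lra.
Qed.

Lemma fabc_through_asymptote_left_right f1 f2 c x1 x2 y1 y2 :
  strongly_hyperbolic f1 -> strongly_hyperbolic f2 -> x1 < x2 -> y1 < c < y2 ->
  fabc_through f1 f2 (None, Some c) (Some x1, Some y1) (Some x2, Some y2).
Proof.
  intros Hf1 Hf2 Hx Hy.
  destruct (sh_two_sided_root f1 f2 (x2 - x1) (x2 - x1) 0 ((y2 - c) / (c - y1)) Hf1 Hf2)
    as [u [Hu Hfu]]; [lra | lra | lra | apply Rdiv_lt_0_compat; lra |].
  assert (0 < f1 u) by (apply (sh_pos f1 Hf1); lra).
  exists ((y2 - c) / f1 u), (u - x2), c.
  split; [apply Rdiv_lt_0_compat; lra|].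
  split; [apply fabc_bar_asymptote | split; [apply fabc_bar_left | apply fabc_bar_right]; try lra].
  - replace (- x1 - (u - x2)) with (x2 - x1 - u) by ring.
    replace (f2 (x2 - x1 - u)) with (f1 u * (c - y1) / (y2 - c)) by (rewrite Hfu; field; lra).
    field. lra.
  - replace (x2 + (u - x2)) with u by ring. field. lra.
Qed.

Lemma fabc_through_right3 f1 f2 x1 x2 x3 y1 y2 y3 : strongly_hyperbolic f1 ->
  x1 < x2 < x3 -> y3 < y2 < y1 -> (y2 - y3) * (x2 - x1) < (y1 - y2) * (x3 - x2) ->
  fabc_through f1 f2 (Some x1, Some y1) (Some x2, Some y2) (Some x3, Some y3).
Proof.
  intros Hf1 Hx Hy Hslope.
  destruct (sh_convex_root f1 (x2 - x1) (x3 - x1) (y1 - y2) (y2 - y3) Hf1)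
    as [u [Hu Hfu]]; [lra | lra | lra | lra |].
  assert (f1 (u + (x2 - x1)) < f1 u) by (apply (sh_decreasing f1 Hf1); lra).
  set (a := (y1 - y2) / (f1 u - f1 (u + (x2 - x1)))).
  exists a, (u - x1), (y1 - a * f1 u).
  split; [apply Rdiv_lt_0_compat; lra|].
  split; [|split]; apply fabc_bar_right; try lra.
  - replace (x1 + (u - x1)) with u by ring. ring.
  - replace (x2 + (u - x1)) with (u + (x2 - x1)) by ring. unfold a. field. lra.
  - replace (x3 + (u - x1)) with (u + (x3 - x1)) by ring.
    replace (f1 (u + (x3 - x1)))
      with (f1 (u + (x2 - x1)) - (y2 - y3) * (f1 u - f1 (u + (x2 - x1))) / (y1 - y2))
      by (rewrite Hfu; field; lra).
    unfold a. field. lra.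
Qed.

Lemma fabc_through_left_right2 f1 f2 x1 x2 x3 y1 y2 y3 :
  strongly_hyperbolic f1 -> strongly_hyperbolic f2 -> x1 < x2 < x3 -> y1 < y3 < y2 ->
  fabc_through f1 f2 (Some x1, Some y1) (Some x2, Some y2) (Some x3, Some y3).
Proof.
  intros Hf1 Hf2 Hx Hy.
  destruct (sh_two_sided_root f1 f2 (x2 - x1) (x3 - x2) ((y2 - y1) / (y3 - y1))
              ((y2 - y3) / (y3 - y1)) Hf1 Hf2) as [u [Hu Hfu]];
    [lra | lra | left; apply Rdiv_lt_0_compat; lra | apply Rdiv_lt_0_compat; lra |].
  assert (f1 (u + (x3 - x2)) < f1 u) by (apply (sh_decreasing f1 Hf1); lra).
  set (a := (y2 - y3) / (f1 u - f1 (u + (x3 - x2)))).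
  exists a, (u - x2), (y2 - a * f1 u).
  split; [apply Rdiv_lt_0_compat; lra|].
  split; [|split]; [apply fabc_bar_left | apply fabc_bar_right | apply fabc_bar_right]; try lra.
  - replace (- x1 - (u - x2)) with (x2 - x1 - u) by ring.
    replace (f2 (x2 - x1 - u))
      with (((y3 - y1) * f1 u - (y2 - y1) * f1 (u + (x3 - x2))) / (y2 - y3))
      by (rewrite Hfu; field; lra).
    unfold a. field. lra.
  - replace (x2 + (u - x2)) with u by ring. ring.
  - replace (x3 + (u - x2)) with (u + (x3 - x2)) by ring. unfold a. field. lra.
Qed.

Lemma fabc_through_pole_right2 f1 f2 b x1 x2 y1 y2 : strongly_hyperbolic f1 ->
  b < x1 < x2 -> y2 < y1 ->
  fabc_through f1 f2 (Some b, None) (Some x1, Some y1) (Some x2, Some y2).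
Proof.
  intros Hf1 Hx Hy.
  assert (f1 (x2 - b) < f1 (x1 - b)) by (apply (sh_decreasing f1 Hf1); lra).
  set (a := (y1 - y2) / (f1 (x1 - b) - f1 (x2 - b))).
  exists a, (- b), (y1 - a * f1 (x1 - b)).
  split; [apply Rdiv_lt_0_compat; lra|].
  split; [apply fabc_bar_pole | split; apply fabc_bar_right; try lra].
  - replace (x1 + - b) with (x1 - b) by ring. ring.
  - replace (x2 + - b) with (x2 - b) by ring. unfold a. field. lra.
Qed.

Lemma fabc_through_pole_left_right f1 f2 b x1 x2 y1 y2 :
  strongly_hyperbolic f1 -> strongly_hyperbolic f2 -> x1 < b < x2 -> y1 < y2 ->
  fabc_through f1 f2 (Some b, None) (Some x1, Some y1) (Some x2, Some y2).
Proof.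
  intros Hf1 Hf2 Hx Hy.
  assert (0 < f1 (x2 - b)) by (apply (sh_pos f1 Hf1); lra).
  assert (0 < f2 (b - x1)) by (apply (sh_pos f2 Hf2); lra).
  set (a := (y2 - y1) / (f1 (x2 - b) + f2 (b - x1))).
  exists a, (- b), (y2 - a * f1 (x2 - b)).
  split; [apply Rdiv_lt_0_compat; lra|].
  split; [apply fabc_bar_pole | split; [apply fabc_bar_left | apply fabc_bar_right]; try lra].
  - replace (- x1 - - b) with (b - x1) by ring. unfold a. field. lra.
  - replace (x2 + - b) with (x2 - b) by ring. ring.
Qed.

Lemma fabc_through_asymptote_pole f1 f2 b c x y : strongly_hyperbolic f1 ->
  b < x -> c < y ->
  fabc_through f1 f2 (None, Some c) (Some b, None) (Some x, Some y).
Proof.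
  intros Hf1 Hx Hy.
  assert (0 < f1 (x - b)) by (apply (sh_pos f1 Hf1); lra).
  exists ((y - c) / f1 (x - b)), (- b), c.
  split; [apply Rdiv_lt_0_compat; lra|].
  split; [apply fabc_bar_asymptote | split; [apply fabc_bar_pole | apply fabc_bar_right; try lra]].
  replace (x + - b) with (x - b) by ring. field. lra.
Qed.

Definition point_opp (p : point) : point :=
  (option_map Ropp (fst p), option_map Ropp (snd p)).

Lemma fabc_opp f1 f2 a b c x : x <> - b ->
  fabc f1 f2 a (- b) (- c) (- x) = - fabc f2 f1 a b c x.
Proof.
  intros Hx. unfold fabc.
  destruct (Rlt_dec (- - b) (- x)); destruct (Rlt_dec (- b) x); try lra.
  - replace (- x + - b) with (- x - b) by ring. ring.
  - replace (- - x - - b) with (x + b) by ring. ring.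
Qed.

Lemma fabc_bar_opp f1 f2 a b c p :
  fabc_bar f2 f1 a b c (point_opp p) -> fabc_bar f1 f2 a (- b) (- c) p.
Proof.
  destruct p as [[x|] [y|]]; unfold point_opp; simpl;
    intros [(x' & Hx' & E) | [E | E]]; try discriminate; injection E; intros.
  - left. exists x. split; [lra|]. subst x'.
    pose proof (fabc_opp f1 f2 a b c (- x) Hx') as Hopp. rewrite Ropp_involutive in Hopp.
    rewrite Hopp, <- H. now rewrite Ropp_involutive.
  - right; left. do 2 f_equal. lra.
  - right; right. do 2 f_equal. lra.
Qed.

Lemma fabc_through_opp f1 f2 p1 p2 p3 :
  fabc_through f2 f1 (point_opp p1) (point_opp p2) (point_opp p3) ->
  fabc_through f1 f2 p1 p2 p3.
Proof.
  intros (a & b & c & Ha & H1 & H2 & H3).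
  exists a, (- b), (- c). split; [exact Ha|]. split; [|split]; apply fabc_bar_opp; assumption.
Qed.

Definition hyp (a b c x : R) : R := c + a / (x - b).

Definition hyp_pt (a b c x : R) : point := (Some x, Some (hyp a b c x)).

Lemma hyp_bar_cases a b c p : 0 < a -> hyp_bar a b c p ->
  p = (None, Some c) \/ p = (Some b, None) \/ exists x, x <> b /\ p = hyp_pt a b c x.
Proof.
  intros Ha [(x & y & E & ->) | [-> | ->]]; [right; right | left | right; left]; auto.
  assert (Hx : x - b <> 0) by (intros H; rewrite H in E; lra).
  exists x. split; [lra|]. unfold hyp_pt, hyp. do 2 f_equal. rewrite <- E. field. exact Hx.
Qed.

Lemma point_opp_hyp_pt a b c x : point_opp (hyp_pt a b c x) = hyp_pt a (- b) (- c) (- x).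
Proof.
  unfold point_opp, hyp_pt, hyp. simpl. do 3 f_equal.
  replace (- x - - b) with (- (x - b)) by ring. rewrite Rdiv_opp_r. ring.
Qed.

Lemma hyp_gt_asymptote a b c x : 0 < a -> b < x -> c < hyp a b c x.
Proof.
  intros Ha Hx. unfold hyp. assert (0 < a / (x - b)) by (apply Rdiv_lt_0_compat; lra). lra.
Qed.

Lemma hyp_lt_asymptote a b c x : 0 < a -> x < b -> hyp a b c x < c.
Proof.
  intros Ha Hx. unfold hyp, Rdiv.
  assert (a * / (x - b) < 0) by (apply Rmult_pos_neg; [lra | apply Rinv_lt_0_compat; lra]).
  lra.
Qed.

Lemma hyp_decreasing_right a b c x y : 0 < a -> b < x -> x < y -> hyp a b c y < hyp a b c x.
Proof.
  intros Ha Hx Hxy. unfold hyp, Rdiv. apply Rplus_lt_compat_l, Rmult_lt_compat_l; [lra|].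
  apply Rinv_lt_contravar; [apply Rmult_lt_0_compat|]; lra.
Qed.

Lemma hyp_convex_right a b c x1 x2 x3 : 0 < a -> b < x1 -> x1 < x2 < x3 ->
  (hyp a b c x2 - hyp a b c x3) * (x2 - x1) < (hyp a b c x1 - hyp a b c x2) * (x3 - x2).
Proof.
  intros Ha Hx1 Hx.
  assert (E : (hyp a b c x1 - hyp a b c x2) * (x3 - x2) - (hyp a b c x2 - hyp a b c x3) * (x2 - x1)
              = a * (x3 - x2) * (x2 - x1) * (x3 - x1) / ((x1 - b) * (x2 - b) * (x3 - b)))
    by (unfold hyp; field; repeat split; lra).
  assert (0 < a * (x3 - x2) * (x2 - x1) * (x3 - x1) / ((x1 - b) * (x2 - b) * (x3 - b)))
    by (apply Rdiv_lt_0_compat; repeat apply Rmult_lt_0_compat; lra).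
  lra.
Qed.

Lemma wlog_lt2 (A : R -> Prop) (P : R -> R -> Prop) :
  (forall x y, P x y -> P y x) ->
  (forall x y, A x -> A y -> x < y -> P x y) ->
  forall x y, A x -> A y -> x <> y -> P x y.
Proof.
  intros Hsym Hs x y Ax Ay Nxy.
  destruct (Rtotal_order x y) as [H|[H|H]]; [auto | contradiction | apply Hsym; auto].
Qed.

Lemma wlog_lt3 (A : R -> Prop) (P : R -> R -> R -> Prop) :
  (forall x y z, P x y z -> P y x z) -> (forall x y z, P x y z -> P x z y) ->
  (forall x y z, A x -> A y -> A z -> x < y < z -> P x y z) ->
  forall x y z, A x -> A y -> A z -> x <> y -> x <> z -> y <> z -> P x y z.
Proof.
  intros S12 S23 Hs x y z Ax Ay Az Nxy Nxz Nyz.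
  destruct (Rtotal_order x y) as [Hxy|[Hxy|Hxy]]; try contradiction;
  destruct (Rtotal_order y z) as [Hyz|[Hyz|Hyz]]; try contradiction;
  destruct (Rtotal_order x z) as [Hxz|[Hxz|Hxz]]; try contradiction;
  first [ apply Hs; auto; lra
        | apply S12, Hs; auto; lra
        | apply S23, Hs; auto; lra
        | apply S12, S23, Hs; auto; lra
        | apply S23, S12, Hs; auto; lra
        | apply S12, S23, S12, Hs; auto; lra ].
Qed.

Lemma fabc_through_hyp3_right f1 f2 a b c x1 x2 x3 :
  strongly_hyperbolic f1 -> strongly_hyperbolic f2 -> 0 < a ->
  x1 <> b -> b < x2 -> x1 < x2 < x3 ->
  fabc_through f1 f2 (hyp_pt a b c x1) (hyp_pt a b c x2) (hyp_pt a b c x3).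
Proof.
  intros Hf1 Hf2 Ha N1 H2 Hx.
  pose proof (hyp_decreasing_right a b c x2 x3 Ha H2 (proj2 Hx)).
  destruct (Rlt_or_le b x1) as [H1|H1].
  - pose proof (hyp_decreasing_right a b c x1 x2 Ha H1 (proj1 Hx)).
    apply fabc_through_right3; [assumption | assumption | lra | apply hyp_convex_right; auto].
  - pose proof (hyp_lt_asymptote a b c x1 Ha ltac:(lra)).
    pose proof (hyp_gt_asymptote a b c x3 Ha ltac:(lra)).
    apply fabc_through_left_right2; auto; lra.
Qed.

Lemma fabc_through_hyp3 f1 f2 a b c x1 x2 x3 :
  strongly_hyperbolic f1 -> strongly_hyperbolic f2 -> 0 < a ->
  x1 <> b -> x2 <> b -> x3 <> b -> x1 <> x2 -> x1 <> x3 -> x2 <> x3 ->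
  fabc_through f1 f2 (hyp_pt a b c x1) (hyp_pt a b c x2) (hyp_pt a b c x3).
Proof.
  intros Hf1 Hf2 Ha. revert x1 x2 x3.
  apply (wlog_lt3 (fun x => x <> b)
           (fun x y z => fabc_through f1 f2 (hyp_pt a b c x) (hyp_pt a b c y) (hyp_pt a b c z))).
  - intros x y z. apply fabc_through_swap12.
  - intros x y z. apply fabc_through_swap23.
  - intros x1 x2 x3 N1 N2 N3 Hx. destruct (Rlt_or_le b x2).
    + apply fabc_through_hyp3_right; auto.
    + apply fabc_through_opp, fabc_through_rev. rewrite !point_opp_hyp_pt.
      apply fabc_through_hyp3_right; auto; lra.
Qed.

Lemma fabc_through_hyp2_asymptote_right f1 f2 a b c x1 x2 :
  strongly_hyperbolic f1 -> strongly_hyperbolic f2 -> 0 < a ->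
  x1 <> b -> b < x2 -> x1 < x2 ->
  fabc_through f1 f2 (None, Some c) (hyp_pt a b c x1) (hyp_pt a b c x2).
Proof.
  intros Hf1 Hf2 Ha N1 H2 Hx.
  pose proof (hyp_gt_asymptote a b c x2 Ha H2).
  destruct (Rlt_or_le b x1) as [H1|H1].
  - pose proof (hyp_decreasing_right a b c x1 x2 Ha H1 Hx).
    apply fabc_through_asymptote_right2; auto; lra.
  - pose proof (hyp_lt_asymptote a b c x1 Ha ltac:(lra)).
    apply fabc_through_asymptote_left_right; auto; lra.
Qed.

Lemma fabc_through_hyp2_asymptote f1 f2 a b c x1 x2 :
  strongly_hyperbolic f1 -> strongly_hyperbolic f2 -> 0 < a ->
  x1 <> b -> x2 <> b -> x1 <> x2 ->
  fabc_through f1 f2 (None, Some c) (hyp_pt a b c x1) (hyp_pt a b c x2).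
Proof.
  intros Hf1 Hf2 Ha. revert x1 x2.
  apply (wlog_lt2 (fun x => x <> b)
           (fun x y => fabc_through f1 f2 (None, Some c) (hyp_pt a b c x) (hyp_pt a b c y))).
  - intros x y. apply fabc_through_swap23.
  - intros x1 x2 N1 N2 Hx. destruct (Rlt_or_le b x2).
    + apply fabc_through_hyp2_asymptote_right; auto.
    + apply fabc_through_opp, fabc_through_swap23. rewrite !point_opp_hyp_pt.
      change (point_opp (None, Some c)) with (@None R, Some (- c)).
      apply fabc_through_hyp2_asymptote_right; auto; lra.
Qed.

Lemma fabc_through_hyp2_pole_right f1 f2 a b c x1 x2 :
  strongly_hyperbolic f1 -> strongly_hyperbolic f2 -> 0 < a ->
  x1 <> b -> b < x2 -> x1 < x2 ->
  fabc_through f1 f2 (Some b, None) (hyp_pt a b c x1) (hyp_pt a b c x2).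
Proof.
  intros Hf1 Hf2 Ha N1 H2 Hx.
  destruct (Rlt_or_le b x1) as [H1|H1].
  - pose proof (hyp_decreasing_right a b c x1 x2 Ha H1 Hx).
    apply fabc_through_pole_right2; auto.
  - pose proof (hyp_lt_asymptote a b c x1 Ha ltac:(lra)).
    pose proof (hyp_gt_asymptote a b c x2 Ha H2).
    apply fabc_through_pole_left_right; auto; lra.
Qed.

Lemma fabc_through_hyp2_pole f1 f2 a b c x1 x2 :
  strongly_hyperbolic f1 -> strongly_hyperbolic f2 -> 0 < a ->
  x1 <> b -> x2 <> b -> x1 <> x2 ->
  fabc_through f1 f2 (Some b, None) (hyp_pt a b c x1) (hyp_pt a b c x2).
Proof.
  intros Hf1 Hf2 Ha. revert x1 x2.
  apply (wlog_lt2 (fun x => x <> b)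
           (fun x y => fabc_through f1 f2 (Some b, None) (hyp_pt a b c x) (hyp_pt a b c y))).
  - intros x y. apply fabc_through_swap23.
  - intros x1 x2 N1 N2 Hx. destruct (Rlt_or_le b x2).
    + apply fabc_through_hyp2_pole_right; auto.
    + apply fabc_through_opp, fabc_through_swap23. rewrite !point_opp_hyp_pt.
      change (point_opp (Some b, None)) with (Some (- b), @None R).
      apply fabc_through_hyp2_pole_right; auto; lra.
Qed.

Lemma fabc_through_hyp1 f1 f2 a b c x :
  strongly_hyperbolic f1 -> strongly_hyperbolic f2 -> 0 < a -> x <> b ->
  fabc_through f1 f2 (None, Some c) (Some b, None) (hyp_pt a b c x).
Proof.
  intros Hf1 Hf2 Ha N. destruct (Rlt_or_le b x).
  - apply fabc_through_asymptote_pole; auto. apply hyp_gt_asymptote; auto.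
  - apply fabc_through_opp. rewrite point_opp_hyp_pt.
    change (point_opp (None, Some c)) with (@None R, Some (- c)).
    change (point_opp (Some b, None)) with (Some (- b), @None R).
    apply fabc_through_asymptote_pole; auto; [lra|]. apply hyp_gt_asymptote; auto; lra.
Qed.

Lemma fabc_through_hyp_bar f1 f2 a b c p1 p2 p3 :
  strongly_hyperbolic f1 -> strongly_hyperbolic f2 -> 0 < a ->
  p1 <> p2 -> p1 <> p3 -> p2 <> p3 ->
  hyp_bar a b c p1 -> hyp_bar a b c p2 -> hyp_bar a b c p3 ->
  fabc_through f1 f2 p1 p2 p3.
Proof.
  intros Hf1 Hf2 Ha N12 N13 N23 H1 H2 H3.
  destruct (hyp_bar_cases a b c p1 Ha H1) as [->|[->|(x1 & Hx1 & ->)]];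
  destruct (hyp_bar_cases a b c p2 Ha H2) as [->|[->|(x2 & Hx2 & ->)]];
  destruct (hyp_bar_cases a b c p3 Ha H3) as [->|[->|(x3 & Hx3 & ->)]];
  (* [congruence] discards coinciding points at infinity; what remains is, up to order,
     one of the four configurations above *)
  try congruence;
  let config :=
    first [ apply fabc_through_hyp3 | apply fabc_through_hyp2_asymptote
          | apply fabc_through_hyp2_pole | apply fabc_through_hyp1 ];
    first [ assumption | congruence ] in
  first [ config
        | apply fabc_through_swap12; config
        | apply fabc_through_swap23; config
        | apply fabc_through_rev; config
        | apply fabc_through_swap12, fabc_through_swap23; config
        | apply fabc_through_swap23, fabc_through_swap12; config ].
Qed.

Theorem theorem4p2 (f1 f2 : R -> R) (p1 p2 p3 : point) :
  strongly_hyperbolic f1 -> strongly_hyperbolic f2 ->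
  p1 <> p2 -> p1 <> p3 -> p2 <> p3 ->
  admissible p1 p2 p3 ->
  exists C : point -> Prop, in_Cminus f1 f2 C /\ C p1 /\ C p2 /\ C p3.
Proof.
  intros Hf1 Hf2 N12 N13 N23 [(s & t & Hs & H1 & H2 & H3) | (a & b & c & Ha & H1 & H2 & H3)].
  - exists (lst_bar s t). split; [right; exists s, t; split; [exact Hs | reflexivity] | auto].
  - destruct (fabc_through_hyp_bar f1 f2 a b c p1 p2 p3 Hf1 Hf2 Ha N12 N13 N23 H1 H2 H3)
      as (a' & b' & c' & Ha' & C1 & C2 & C3).
    exists (fabc_bar f1 f2 a' b' c').
    split; [left; exists a', b', c'; split; [exact Ha' | reflexivity] | auto].
Qed.
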